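(* Let $(\bm M_s)$ be a sequence of parameters with $\bm M_s\in\mathcal M$ for every index $s$. Then for every $t$ and every $k=1,\dots,2H$, $$\|\Phi^x_k(\bm M_{t-H:t-1})\|_2\le\kappa^2(1-\gamma)^{k-1}\mathds1_{(k\le H)}+\phi H(1-\gamma)^{k-2}\mathds1_{(k\ge2)},$$ $$\|\Phi^u_k(\bm M_{t-H:t})\|_2\le\kappa^3(1-\gamma)^{k-1}\mathds1_{(k\le H)}(2\sqrt{nm}+1)+\kappa\phi H(1-\gamma)^{k-2}\mathds1_{(k\ge2)},$$ where $\phi=2\kappa^5\kappa_B\sqrt{mn}$.
   Context: $A\in\mathbb R^{n\times n}$, $B\in\mathbb R^{n\times m}$; matrix $\|\cdot\|_\infty$ = max absolute row sum, $\|\cdot\|_2$ spectral norm. For $\kappa\ge1$, $\gamma\in(0,1]$, $K$ is $(\kappa,\gamma)$-strongly stable if $A-BK=Q^{-1}LQ$ with $\|L\|_2\le1-\gamma$ and $\max(\|Q\|_2,\|Q^{-1}\|_2,\|K\|_2)\le\kappa$; $\kappa_B=\max(\|B\|_2,1)$. Fix a $(\kappa,\gamma)$-strongly stable $\mathbb K$, $A_{\mathbb K}=A-B\mathbb K$, and $H\ge1$. A parameter is a list $\bm M=(M^{[1]},\dots,M^{[H]})$, $M^{[i]}\in\mathbb R^{m\times n}$; $\mathcal M=\{\bm M:\|M^{[i]}\|_\infty\le2\sqrt n\kappa^3(1-\gamma)^{i-1},\ 1\le i\le H\}$. For a time-indexed sequence of parameters, $\Phi^x_k(\bm M_{t-H:t-1})=A_{\mathbb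 K}^{k-1}\mathds1_{(k\le H)}+\sum_{i=1}^HA_{\mathbb K}^{i-1}BM_{t-i}^{[k-i]}\mathds1_{(1\le k-i\le H)}$ and $\Phi^u_k(\bm M_{t-H:t})=M_t^{[k]}\mathds1_{(k\le H)}-\mathbb K\Phi^x_k(\bm M_{t-H:t-1})$; $\mathds1_{(\cdot)}$ is the indicator (terms with indicator $0$ are omitted). *)

From HB Require Import structures.
From mathcomp Require Import all_boot all_order all_algebra.
From mathcomp Require Import classical_sets reals.
Set Implicit Arguments. Unset Strict Implicit. Unset Printing Implicit Defensive.
Import Order.TTheory GRing.Theory Num.Theory.
Local Open Scope ring_scope.
Local Open Scope classical_set_scope.

Section Defs.
Variable R : realType.

Definition vnorm2 p (x : 'cV[R]_p) : R := Num.sqrt (\sum_i (x i 0) ^+ 2).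

Definition norm2 p q (A : 'M[R]_(p, q)) : R :=
  sup [set r | exists x : 'cV[R]_q, vnorm2 x <= 1 /\ r = vnorm2 (A *m x)].

Definition norminf p q (A : 'M[R]_(p, q)) : R :=
  \big[Num.max/0]_(i < p) \sum_(j < q) `|A i j|.

Definition strongly_stable n m (A : 'M[R]_n) (B : 'M[R]_(n, m))
    (K : 'M[R]_(m, n)) (kappa gamma : R) : Prop :=
  exists (Q L : 'M[R]_n),
    [/\ Q \in unitmx, A - B *m K = invmx Q *m L *m Q,
        norm2 L <= 1 - gamma &
        [/\ norm2 Q <= kappa, norm2 (invmx Q) <= kappa & norm2 K <= kappa]].

Definition kappaB n m (B : 'M[R]_(n, m)) : R := Num.max (norm2 B) 1.

(* A parameter is a list M^{[1]},...,M^{[H]}; we model it as a function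
   nat -> 'M_(m,n) of which only the indices 1..H are used.
   A time-indexed sequence of parameters is Ms : int -> nat -> 'M_(m,n),
   Ms s i = M_s^{[i]}. *)
Definition in_calM n m (H : nat) (kappa gamma : R) (M : nat -> 'M[R]_(m, n)) :=
  forall i, (1 <= i <= H)%N ->
    norminf (M i) <= 2 * Num.sqrt n%:R * kappa ^+ 3 * (1 - gamma) ^+ i.-1.

Definition Phix n m (AK : 'M[R]_n) (B : 'M[R]_(n, m)) (H : nat)
    (Ms : int -> nat -> 'M[R]_(m, n)) (t : int) (k : nat) : 'M[R]_n :=
  (if (k <= H)%N then AK ^+ k.-1 else 0)
  + \sum_(1 <= i < H.+1 | (1 <= k - i <= H)%N)
       AK ^+ i.-1 *m B *m Ms (t - i%:Z) (k - i)%N.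

Definition Phiu n m (AK : 'M[R]_n) (B : 'M[R]_(n, m)) (K : 'M[R]_(m, n))
    (H : nat) (Ms : int -> nat -> 'M[R]_(m, n)) (t : int) (k : nat)
    : 'M[R]_(m, n) :=
  (if (k <= H)%N then Ms t k else 0) - K *m Phix AK B H Ms t k.

End Defs.

From mathcomp Require Import all_boot all_order all_algebra.
From mathcomp Require Import classical_sets reals.
From mathcomp Require Import ring lra zify.
Import Order.TTheory GRing.Theory Num.Theory.
Set Implicit Arguments. Unset Strict Implicit. Unset Printing Implicit Defensive.
Local Open Scope ring_scope.

(** Writing A_K = Q^-1 L Q, the powers of A_K are bounded by
    kappa^2 (1 - gamma)^j, and the spectral norm of each M^[i] is at most
    sqrt m times its row-sum norm, i.e. 2 sqrt(mn) kappa^3 (1 - gamma)^(i-1).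
    In Phi^x_k every summand A_K^(i-1) B M^[k-i] therefore has norm at most
    kappa^2 kappa_B 2 sqrt(mn) kappa^3 (1 - gamma)^(k-2) = phi (1 - gamma)^(k-2),
    and there are at most H of them.  Phi^u_k = M^[k] - K Phi^x_k then follows
    from the triangle inequality and ||K|| <= kappa. *)

Section EuclideanNorm.
Variable R : realType.
Implicit Types (p : nat).

Lemma vnorm2_ge0 p (x : 'cV[R]_p) : 0 <= vnorm2 x.
Proof. exact: sqrtr_ge0. Qed.

Lemma vnorm2_sqr p (x : 'cV[R]_p) : vnorm2 x ^+ 2 = \sum_i x i 0 ^+ 2.
Proof. by rewrite sqr_sqrtr // sumr_ge0 // => i _; rewrite sqr_ge0. Qed.

Lemma vnorm2_eq0 p (x : 'cV[R]_p) : vnorm2 x = 0 -> x = 0.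
Proof.
move=> x0; apply/matrixP => i j; rewrite ord1 mxE; apply/eqP.
have sum0 : \sum_i x i 0 ^+ 2 = 0 by rewrite -vnorm2_sqr x0 expr0n.
rewrite -sqrf_eq0; apply/eqP.
exact: (psumr_eq0P (fun i _ => sqr_ge0 (x i 0)) sum0).
Qed.

Lemma vnorm2_0 p : vnorm2 (0 : 'cV[R]_p) = 0.
Proof. by rewrite /vnorm2 big1 ?sqrtr0 // => i _; rewrite mxE expr0n. Qed.

Lemma norm_entry_le_vnorm2 p (x : 'cV[R]_p) j : `|x j 0| <= vnorm2 x.
Proof.
rewrite -sqrtr_sqr; apply: ler_wsqrtr.
by rewrite (bigD1 j) //= lerDl sumr_ge0 // => i _; rewrite sqr_ge0.
Qed.

Lemma cauchy_schwarz p (x y : 'cV[R]_p) :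
  \sum_i x i 0 * y i 0 <= vnorm2 x * vnorm2 y.
Proof.
have [/vnorm2_eq0 -> | nx0] := eqVneq (vnorm2 x) 0.
  by rewrite vnorm2_0 mul0r big1 // => i _; rewrite mxE mul0r.
have [/vnorm2_eq0 -> | ny0] := eqVneq (vnorm2 y) 0.
  by rewrite vnorm2_0 mulr0 big1 // => i _; rewrite mxE mulr0.
set a := vnorm2 x; set b := vnorm2 y.
have a_gt0 : 0 < a by rewrite lt_def nx0 vnorm2_ge0.
have b_gt0 : 0 < b by rewrite lt_def ny0 vnorm2_ge0.
(* AM-GM termwise: 2ab x_i y_i <= b^2 x_i^2 + a^2 y_i^2, which sums to 2 a^2 b^2. *)
have amgm : \sum_i (2 * a * b) * (x i 0 * y i 0)
    <= \sum_i (b ^+ 2 * x i 0 ^+ 2 + a ^+ 2 * y i 0 ^+ 2).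
  by apply: ler_sum => i _; have := sqr_ge0 (b * x i 0 - a * y i 0); nra.
rewrite -mulr_sumr big_split /= -!mulr_sumr -!vnorm2_sqr -/a -/b in amgm.
have ab_gt0 : 0 < a * b by exact: mulr_gt0.
nra.
Qed.

Lemma ler_vnorm2D p (x y : 'cV[R]_p) : vnorm2 (x + y) <= vnorm2 x + vnorm2 y.
Proof.
have sqr_le : \sum_i (x + y) i 0 ^+ 2 <= (vnorm2 x + vnorm2 y) ^+ 2.
  have -> : \sum_i (x + y) i 0 ^+ 2 =
      \sum_i x i 0 ^+ 2 + 2 * \sum_i x i 0 * y i 0 + \sum_i y i 0 ^+ 2.
    by rewrite mulr_sumr -!big_split /=; apply: eq_bigr => i _; rewrite mxE; ring.
  have := cauchy_schwarz x y; rewrite -!vnorm2_sqr; lra.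
apply: le_trans (ler_wsqrtr sqr_le) _.
by rewrite sqrtr_sqr ger0_norm // addr_ge0 // vnorm2_ge0.
Qed.

Lemma vnorm2Z p c (x : 'cV[R]_p) : vnorm2 (c *: x) = `|c| * vnorm2 x.
Proof.
rewrite /vnorm2 -sqrtr_sqr -sqrtrM ?sqr_ge0 // mulr_sumr.
by congr Num.sqrt; apply: eq_bigr => i _; rewrite mxE; ring.
Qed.

Lemma vnorm2N p (x : 'cV[R]_p) : vnorm2 (- x) = vnorm2 x.
Proof. by rewrite -scaleN1r vnorm2Z normrN normr1 mul1r. Qed.

End EuclideanNorm.

Section SpectralNorm.
Variable R : realType.
Implicit Types (p q : nat).

Lemma norm_mulmx_le_norminf p q (A : 'M[R]_(p, q)) (x : 'cV[R]_q) i :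
  vnorm2 x <= 1 -> `|(A *m x) i 0| <= norminf A.
Proof.
move=> x1; rewrite mxE; apply: le_trans (ler_norm_sum _ _ _) _.
apply: le_trans (le_bigmax (0 : R) (fun i => \sum_j `|A i j|) i).
apply: ler_sum => j _; rewrite normrM ler_piMr //.
exact: le_trans (norm_entry_le_vnorm2 x j) x1.
Qed.

Lemma vnorm2_mulmx_le_norminf p q (A : 'M[R]_(p, q)) (x : 'cV[R]_q) :
  vnorm2 x <= 1 -> vnorm2 (A *m x) <= Num.sqrt p%:R * norminf A.
Proof.
move=> x1; have N0 : 0 <= norminf A by exact: bigmax_ge_id.
have sqr_le : \sum_i (A *m x) i 0 ^+ 2 <= p%:R * norminf A ^+ 2.
  have -> : p%:R * norminf A ^+ 2 = \sum_(i < p) norminf A ^+ 2.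
    by rewrite sumr_const card_ord mulr_natl.
  apply: ler_sum => i _.
  rewrite -real_normK ?num_real // lerXn2r ?nnegrE //.
  exact: norm_mulmx_le_norminf.
apply: le_trans (ler_wsqrtr sqr_le) _.
by rewrite sqrtrM // sqrtr_sqr ger0_norm.
Qed.

Let image_ball p q (A : 'M[R]_(p, q)) :=
  [set r | exists x : 'cV[R]_q, vnorm2 x <= 1 /\ r = vnorm2 (A *m x)]%classic.

Let image_ball_ubound p q (A : 'M[R]_(p, q)) : has_ubound (image_ball A).
Proof.
by exists (Num.sqrt p%:R * norminf A) => r [x [x1 ->]]; exact: vnorm2_mulmx_le_norminf.
Qed.

Lemma norm2_ub p q (A : 'M[R]_(p, q)) x :
  vnorm2 x <= 1 -> vnorm2 (A *m x) <= norm2 A.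
Proof. by move=> x1; apply: (ub_le_sup (image_ball_ubound A)); exists x. Qed.

Lemma norm2_lub p q (A : 'M[R]_(p, q)) c :
  (forall x, vnorm2 x <= 1 -> vnorm2 (A *m x) <= c) -> norm2 A <= c.
Proof.
move=> Ac; apply: ge_sup => [|r [x [x1 ->]]]; last exact: Ac.
by exists (vnorm2 (A *m 0)), 0; rewrite vnorm2_0 ler01.
Qed.

Lemma norm2_ge0 p q (A : 'M[R]_(p, q)) : 0 <= norm2 A.
Proof.
apply: le_trans (norm2_ub A (x := 0) _); first exact: vnorm2_ge0.
by rewrite vnorm2_0 ler01.
Qed.

Lemma norm2_0 p q : norm2 (0 : 'M[R]_(p, q)) = 0.
Proof.
apply/le_anti; rewrite norm2_ge0 andbT.
by apply: norm2_lub => x _; rewrite mul0mx vnorm2_0.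
Qed.

Lemma norm2_1_le p : norm2 (1%:M : 'M[R]_p) <= 1.
Proof. by apply: norm2_lub => x x1; rewrite mul1mx. Qed.

Lemma norm2_le_norminf p q (A : 'M[R]_(p, q)) :
  norm2 A <= Num.sqrt p%:R * norminf A.
Proof. exact/norm2_lub/vnorm2_mulmx_le_norminf. Qed.

Lemma ler_vnorm2_mulmx p q (A : 'M[R]_(p, q)) x :
  vnorm2 (A *m x) <= norm2 A * vnorm2 x.
Proof.
have [/vnorm2_eq0 -> | x_neq0] := eqVneq (vnorm2 x) 0.
  by rewrite mulmx0 !vnorm2_0 mulr0.
have x_gt0 : 0 < vnorm2 x by rewrite lt_def x_neq0 vnorm2_ge0.
have unit_x : vnorm2 ((vnorm2 x)^-1 *: x) <= 1.
  by rewrite vnorm2Z ger0_norm ?invr_ge0 ?vnorm2_ge0 // mulVf.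
have := norm2_ub A unit_x.
rewrite -scalemxAr vnorm2Z ger0_norm ?invr_ge0 ?vnorm2_ge0 //.
by rewrite -ler_pdivlMl ?invr_gt0 // invrK mulrC.
Qed.

Lemma ler_norm2M p q r (A : 'M[R]_(p, q)) (B : 'M[R]_(q, r)) :
  norm2 (A *m B) <= norm2 A * norm2 B.
Proof.
apply: norm2_lub => x x1; rewrite -mulmxA.
apply: le_trans (ler_vnorm2_mulmx _ _) _; rewrite ler_wpM2l ?norm2_ge0 //.
apply: le_trans (ler_vnorm2_mulmx _ _) _.
by rewrite ler_piMr ?norm2_ge0.
Qed.

Lemma ler_norm2D p q (A B : 'M[R]_(p, q)) : norm2 (A + B) <= norm2 A + norm2 B.
Proof.
apply: norm2_lub => x x1; rewrite mulmxDl.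
by apply: le_trans (ler_vnorm2D _ _) _; rewrite lerD // norm2_ub.
Qed.

Lemma norm2N p q (A : 'M[R]_(p, q)) : norm2 (- A) = norm2 A.
Proof.
suff le_oppA (C : 'M[R]_(p, q)) : norm2 (- C) <= norm2 C.
  by apply/le_anti; rewrite le_oppA -{1}[A]opprK le_oppA.
by apply: norm2_lub => x x1; rewrite mulNmx vnorm2N norm2_ub.
Qed.

Lemma ler_norm2B p q (A B : 'M[R]_(p, q)) : norm2 (A - B) <= norm2 A + norm2 B.
Proof. by rewrite -(norm2N B) ler_norm2D. Qed.

Lemma ler_norm2_sum p q (I : Type) (r : seq I) (P : pred I) (F : I -> 'M[R]_(p, q)) :
  norm2 (\sum_(i <- r | P i) F i) <= \sum_(i <- r | P i) norm2 (F i).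
Proof.
apply: (big_rec2 (fun a b => norm2 b <= a)); first by rewrite norm2_0.
by move=> i y1 y2 _ le_y; apply: le_trans (ler_norm2D _ _) _; rewrite lerD2l.
Qed.

Lemma ler_norm2X p (L : 'M[R]_p) j : norm2 (L ^+ j) <= norm2 L ^+ j.
Proof.
elim: j => [|j IHj]; first exact: norm2_1_le.
rewrite !exprS; apply: le_trans (ler_norm2M _ _) _.
by rewrite ler_wpM2l ?norm2_ge0.
Qed.

Lemma norm2X_conj_le p (A Q L : 'M[R]_p) j : Q \in unitmx ->
  A = invmx Q *m L *m Q ->
  norm2 (A ^+ j) <= norm2 (invmx Q) * norm2 L ^+ j * norm2 Q.
Proof.
move=> Qu ->; have -> : (invmx Q *m L *m Q) ^+ j = invmx Q *m L ^+ j *m Q.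
  elim: j => [|j IHj]; first by rewrite !expr0 mulmx1 mulVmx.
  rewrite exprS IHj -mulmxE !mulmxA -(mulmxA _ Q) mulmxV // mulmx1.
  by rewrite -(mulmxA _ L) mulmxE -exprS.
apply: le_trans (ler_norm2M _ _) _; rewrite ler_wpM2r ?norm2_ge0 //.
apply: le_trans (ler_norm2M _ _) _.
by rewrite ler_wpM2l ?norm2_ge0 ?ler_norm2X.
Qed.

End SpectralNorm.

Section Bounds.
Variables (R : realType) (n m : nat).

Lemma strongly_stable_norm2X (A : 'M[R]_n) (B : 'M[R]_(n, m)) K kappa gamma j :
  strongly_stable A B K kappa gamma ->
  norm2 ((A - B *m K) ^+ j) <= kappa ^+ 2 * (1 - gamma) ^+ j.
Proof.
move=> [Q [L [Qu AKE L_le [Q_le Qinv_le _]]]].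
apply: le_trans (norm2X_conj_le j Qu AKE) _.
have kappa_ge0 : 0 <= kappa := le_trans (norm2_ge0 _) Q_le.
have -> : kappa ^+ 2 * (1 - gamma) ^+ j = kappa * (1 - gamma) ^+ j * kappa by ring.
apply: ler_pM Q_le; rewrite ?mulr_ge0 ?exprn_ge0 ?norm2_ge0 //.
apply: ler_pM Qinv_le _; rewrite ?exprn_ge0 ?norm2_ge0 //.
by rewrite lerXn2r ?nnegrE ?norm2_ge0 // (le_trans (norm2_ge0 _) L_le).
Qed.

Lemma in_calM_norm2 H kappa gamma (M : nat -> 'M[R]_(m, n)) i :
  in_calM H kappa gamma M -> (1 <= i <= H)%N ->
  norm2 (M i) <= 2 * Num.sqrt (m%:R * n%:R) * kappa ^+ 3 * (1 - gamma) ^+ i.-1.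
Proof.
move=> calM iH; apply: le_trans (norm2_le_norminf _) _.
have -> : 2 * Num.sqrt (m%:R * n%:R) * kappa ^+ 3 * (1 - gamma) ^+ i.-1
    = Num.sqrt m%:R * (2 * Num.sqrt n%:R * kappa ^+ 3 * (1 - gamma) ^+ i.-1).
  by rewrite sqrtrM //; ring.
by rewrite ler_wpM2l ?sqrtr_ge0 ?calM.
Qed.

Definition Phix_bound (a b c r : R) (H k : nat) : R :=
  (if (k <= H)%N then a * r ^+ k.-1 else 0)
  + (if (2 <= k)%N then a * b * c * H%:R * r ^+ (k - 2) else 0).

Variables (AK : 'M[R]_n) (B : 'M[R]_(n, m)) (H : nat).
Variables (Ms : int -> nat -> 'M[R]_(m, n)) (a b c r : R).
Hypotheses (c_ge0 : 0 <= c) (r_ge0 : 0 <= r).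
Hypothesis AK_le : forall j, norm2 (AK ^+ j) <= a * r ^+ j.
Hypothesis B_le : norm2 B <= b.
Hypothesis Ms_le : forall s i, (1 <= i <= H)%N -> norm2 (Ms s i) <= c * r ^+ i.-1.

Lemma norm2_Phix_le t k : norm2 (Phix AK B H Ms t k) <= Phix_bound a b c r H k.
Proof.
have a_ge0 : 0 <= a by have := AK_le 0; rewrite expr0 mulr1; exact: le_trans (norm2_ge0 _).
have b_ge0 : 0 <= b := le_trans (norm2_ge0 _) B_le.
rewrite /Phix /Phix_bound; apply: le_trans (ler_norm2D _ _) _; apply: lerD.
  by case: ifP; rewrite ?norm2_0.
apply: le_trans (ler_norm2_sum _ _ _) _; case: ifP => [k_ge2|k_lt2]; last first.
  rewrite big_nat_cond big1 // => i /andP[/andP[i_ge1 _] /andP[ki_ge1 _]].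
  by move/negbT: k_lt2; lia.
pose d := a * b * c * r ^+ (k - 2).
have d_ge0 : 0 <= d by rewrite !mulr_ge0 ?exprn_ge0.
have term_le i : (1 <= i)%N -> (1 <= k - i <= H)%N ->
    norm2 (AK ^+ i.-1 *m B *m Ms (t - i%:Z) (k - i)) <= d.
  move=> i_ge1 kiH; apply: le_trans (ler_norm2M _ _) _.
  apply: le_trans (ler_wpM2r (norm2_ge0 _) (ler_norm2M _ _)) _.
  have -> : d = a * r ^+ i.-1 * b * (c * r ^+ (k - i).-1).
    by rewrite /d (_ : k - 2 = i.-1 + (k - i).-1)%N ?exprD; [ring | lia].
  apply: ler_pM (Ms_le _ kiH); rewrite ?mulr_ge0 ?norm2_ge0 //.
  by apply: ler_pM B_le; rewrite ?norm2_ge0.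
rewrite big_nat_cond big_mkcond /=.
have -> : a * b * c * H%:R * r ^+ (k - 2) = \sum_(1 <= i < H.+1) d.
  by rewrite sumr_const_nat subn1 -mulr_natr /d; ring.
apply: ler_sum => i _; case: ifP => [/andP[/andP[i_ge1 _] kiH] | _] //.
exact: term_le.
Qed.

Lemma norm2_Phiu_le (K : 'M[R]_(m, n)) kK t k : (1 <= k)%N -> norm2 K <= kK ->
  norm2 (Phiu AK B K H Ms t k)
    <= (if (k <= H)%N then c * r ^+ k.-1 else 0) + kK * Phix_bound a b c r H k.
Proof.
move=> k_ge1 K_le; rewrite /Phiu; apply: le_trans (ler_norm2B _ _) _; apply: lerD.
  by case: ifP => [kH|_]; rewrite ?norm2_0 // Ms_le ?k_ge1.
apply: le_trans (ler_norm2M _ _) _.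
by apply: ler_pM K_le (norm2_Phix_le t k); rewrite norm2_ge0.
Qed.

End Bounds.

Theorem lemma13 (R : realType) (n m : nat) (A : 'M[R]_n) (B : 'M[R]_(n, m))
  (K : 'M[R]_(m, n)) (kappa gamma : R) (H : nat)
  (Ms : int -> nat -> 'M[R]_(m, n)) :
  1 <= kappa -> 0 < gamma -> gamma <= 1 -> (1 <= H)%N ->
  strongly_stable A B K kappa gamma ->
  (forall s, in_calM H kappa gamma (Ms s)) ->
  let phi := 2 * kappa ^+ 5 * kappaB B * Num.sqrt (m%:R * n%:R) in
  forall (t : int) (k : nat), (1 <= k <= 2 * H)%N ->
    norm2 (Phix (A - B *m K) B H Ms t k)
      <= (if (k <= H)%N then kappa ^+ 2 * (1 - gamma) ^+ k.-1 else 0)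
         + (if (2 <= k)%N then phi * H%:R * (1 - gamma) ^+ (k - 2) else 0)
    /\
    norm2 (Phiu (A - B *m K) B K H Ms t k)
      <= (if (k <= H)%N then
            kappa ^+ 3 * (1 - gamma) ^+ k.-1
              * (2 * Num.sqrt (n%:R * m%:R) + 1) else 0)
         + (if (2 <= k)%N then kappa * phi * H%:R * (1 - gamma) ^+ (k - 2)
            else 0).
Proof.
move=> kappa_ge1 _ gamma_le1 _ stable calM phi t k /andP[k_ge1 _].
have [_ [_ [_ _ _ [_ _ K_le]]]] := stable.
have r_ge0 : 0 <= 1 - gamma by rewrite subr_ge0.
set c := 2 * Num.sqrt (m%:R * n%:R) * kappa ^+ 3.
have c_ge0 : 0 <= c by rewrite !mulr_ge0 ?sqrtr_ge0 ?exprn_ge0 // (le_trans ler01).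
have AK_le j := strongly_stable_norm2X j stable.
have B_le : norm2 B <= kappaB B by rewrite le_max lexx.
have Ms_le s i : (1 <= i <= H)%N -> norm2 (Ms s i) <= c * (1 - gamma) ^+ i.-1.
  exact: in_calM_norm2.
have phiE : phi = kappa ^+ 2 * kappaB B * c by rewrite /phi /c; ring.
split.
  by apply: le_trans (norm2_Phix_le c_ge0 r_ge0 AK_le B_le Ms_le t k) _; rewrite phiE.
apply: le_trans (norm2_Phiu_le c_ge0 r_ge0 AK_le B_le Ms_le t k_ge1 K_le) _.
have leading_terms :
    (if (k <= H)%N then c * (1 - gamma) ^+ k.-1 else 0)
      + kappa * (if (k <= H)%N then kappa ^+ 2 * (1 - gamma) ^+ k.-1 else 0)
    = if (k <= H)%N then
        kappa ^+ 3 * (1 - gamma) ^+ k.-1 * (2 * Num.sqrt (n%:R * m%:R) + 1) else 0.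
  by case: ifP => _; rewrite ?mulr0 ?addr0 // /c [n%:R * _]mulrC; ring.
rewrite /Phix_bound mulrDr addrA leading_terms lerD2l.
by case: ifP => _; rewrite ?mulr0 // phiE !mulrA.
Qed.
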